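(* Let $p, p' > 1$ be real numbers with $\frac{1}{p}+\frac{1}{p'}=1$, and let $\mu,\nu$ be probability distributions on $S$ with $\nu(s)>0$ for all $s\in S$. For every joint stationary strategy $\boldsymbol{\pi}=(\pi^i,\boldsymbol\pi^{-i})$, every player $i\in\{1,\dots,N\}$ and every $v^i:S\to\mathbb{R}$, letting $\pi^i_*$ be a stationary best response of player $i$ to $\boldsymbol\pi^{-i}$ (i.e. $v^i_{\pi^i_*,\boldsymbol\pi^{-i}}=v^{*i}_{\boldsymbol\pi^{-i}}$, the fixed point of $\mathcal T^{*i}_{\boldsymbol\pi^{-i}}$), $$\big\|v^i_{\pi^i_*,\boldsymbol\pi^{-i}}-v^i_{\pi^i,\boldsymbol\pi^{-i}}\big\|_{\mu,p}\le \frac{1}{1-\gamma}\Big(C_\infty(\mu,\nu,(\pi^i_*,\boldsymbol\pi^{-i}))^{p'/p}+C_\infty(\mu,\nu,(\pi^i,\boldsymbol\pi^{-i}))^{p'/p}\Big)^{1/p'}\Big[\big\|\mathcal T^{*i}_{\boldsymbol\pi^{-i}}v^i-v^i\big\|_{\nu,p}^p+\big\|\mathcal T^i_{\boldsymbol\pi}v^i-v^i\big\|_{\nu,p}^p\Big]^{1/p}.$$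
   Context: An $N$-player Markov game has a finite state space $S$, finite nonempty action sets $A^i(s)$ for each player $i\in\{1,\dots,N\}$ and state $s$, rewards $r^i(s,\mathbf a)\in\mathbb{R}$ for joint actions $\mathbf a=(a^1,\dots,a^N)$, a transition kernel $p(s'|s,\mathbf a)$, and a discount factor $\gamma\in[0,1)$. We write $\mathbf a=(a^i,\mathbf a^{-i})$ where $\mathbf a^{-i}$ is the joint action of all players other than $i$. A stationary strategy $\pi^i$ of player $i$ assigns to each $s$ a probability distribution $\pi^i(\cdot|s)$ on $A^i(s)$; a joint strategy is $\boldsymbol\pi=(\pi^1,\dots,\pi^N)=(\pi^i,\boldsymbol\pi^{-i})$, with actions drawn independently across players. Define $\mathcal P_{\boldsymbol\pi}(s'|s)=E_{\mathbf a\sim\boldsymbol\pi(\cdot|s)}[p(s'|s,\mathbf a)]$, $r^i_{\boldsymbol\pi}(s)=E_{\mathbf a\sim\boldsymbol\pi(\cdot|s)}[r^i(s,\mathbf a)]$, $\mathcal P_{\boldsymbol\pi^{-i}}(s'|s,a^i)=E_{\mathbf a^{-i}\sim\boldsymbol\pi^{-i}(\cdot|s)}[p(s'|s,a^i,\mathbf a^{-i})]$, $r^i_{\boldsymbol\pi^{-i}}(s,a^i)=E_{\mathbf a^{-i}\sim\boldsymbol\pi^{-i}(\cdot|s)}[r^i(s,a^i,\mathbf a^{-i})]$. The value of $\boldsymbol\pi$ for player $i$ is $v^i_{\boldsymbol\pi}=(\mathcal I-\gamma\mathcal P_{\boldsymbol\pi})^{-1}r^i_{\boldsymbol\pi}$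 (vectors/matrices indexed by $S$, $\mathcal I$ the identity). The best-response value is $v^{*i}_{\boldsymbol\pi^{-i}}=\max_{\tilde\pi^i} v^i_{\tilde\pi^i,\boldsymbol\pi^{-i}}$ (pointwise maximum over stationary strategies of player $i$). For $v:S\to\mathbb R$, the Bellman operators are $\mathcal T^i_{\boldsymbol\pi}v(s)=r^i_{\boldsymbol\pi}(s)+\gamma\sum_{s'}\mathcal P_{\boldsymbol\pi}(s'|s)v(s')$ and $\mathcal T^{*i}_{\boldsymbol\pi^{-i}}v(s)=\max_{a^i\in A^i(s)}\big[r^i_{\boldsymbol\pi^{-i}}(s,a^i)+\gamma\sum_{s'}\mathcal P_{\boldsymbol\pi^{-i}}(s'|s,a^i)v(s')\big]$. For a distribution $\mu$ on $S$ and $f:S\to\mathbb R$, $\|f\|_{\mu,p}=(\sum_{s}\mu(s)|f(s)|^p)^{1/p}$. The concentrability coefficient of a joint strategy $\boldsymbol\pi$ is $C_\infty(\mu,\nu,\boldsymbol\pi)=\max_{s\in S}\frac{[(1-\gamma)\mu^T(\mathcal I-\gamma\mathcal P_{\boldsymbol\pi})^{-1}](s)}{\nu(s)}$ (the sup-norm of the Radon–Nikodym derivative of the distribution $(1-\gamma)\mu^T(\mathcal I-\gamma\mathcal P_{\boldsymbol\pi})^{-1}$ with respect to $\nu$). *)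

From mathcomp Require Import all_boot.
From Stdlib Require Import Reals ClassicalEpsilon.
Set Implicit Arguments.
Unset Strict Implicit.
Unset Printing Implicit Defensive.
Local Open Scope R_scope.

(* Real power for nonnegative bases: rpow x y = x^y for x > 0, and 0 for x <= 0
   (Stdlib's Rpower 0 y is 1, which is not the intended 0^y = 0 for y > 0). *)
Definition rpow (x y : R) : R := if Rle_dec x 0 then 0 else Rpower x y.

(* Maximum of a real function over a finite type (value 0 on an empty type,
   which never occurs below since all types involved are nonempty). *)
Definition fmax (T : finType) (F : T -> R) : R :=
  match enum T with
  | [::] => 0
  | x :: _ => \big[Rmax/F x]_(y : T) F y
  end.

Definition rsum (T : finType) (F : T -> R) : R := \big[Rplus/0]_(y : T) F y.

Definition jact (N : nat) (S : finType) (A : 'I_N -> S -> finType) (s : S) : finType :=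
  {dffun forall j : 'I_N, A j s}.

(* A (stationary) strategy for each player: pi j s a = probability that player j
   plays a in state s. A joint strategy is such a family over all players. *)
Definition jstrat (N : nat) (S : finType) (A : 'I_N -> S -> finType) : Type :=
  forall (j : 'I_N) (s : S), A j s -> R.

Definition is_strategy (N : nat) (S : finType) (A : 'I_N -> S -> finType)
  (j : 'I_N) (pij : forall s : S, A j s -> R) : Prop :=
  forall s : S, (forall a, 0 <= pij s a) /\ rsum (pij s) = 1.

Definition is_jstrategy (N : nat) (S : finType) (A : 'I_N -> S -> finType)
  (pi : jstrat A) : Prop := forall j : 'I_N, is_strategy (pi j).

Definition is_distr (S : finType) (mu : S -> R) : Prop :=
  (forall s, 0 <= mu s) /\ rsum mu = 1.

Section Game.
Variables (N : nat) (S : finType) (A : 'I_N -> S -> finType).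

Definition jprob (pi : jstrat A) (s : S) (a : jact A s) : R :=
  \big[Rmult/1]_(j : 'I_N) pi j s (a j).

Definition jprob_mi (i : 'I_N) (pi : jstrat A) (s : S) (a : jact A s) : R :=
  \big[Rmult/1]_(j : 'I_N | j != i) pi j s (a j).

Variables (r : 'I_N -> forall s : S, jact A s -> R)
          (p : forall s : S, jact A s -> S -> R) (gamma : R).

Definition Ppi (pi : jstrat A) (s s' : S) : R :=
  rsum (fun a : jact A s => jprob pi a * p a s').
Definition rpi (i : 'I_N) (pi : jstrat A) (s : S) : R :=
  rsum (fun a : jact A s => jprob pi a * r i a).

Definition Pmi (i : 'I_N) (pi : jstrat A) (s : S) (ai : A i s) (s' : S) : R :=
  \big[Rplus/0]_(a : jact A s | a i == ai) (jprob_mi i pi a * p a s').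
Definition rmi (i : 'I_N) (pi : jstrat A) (s : S) (ai : A i s) : R :=
  \big[Rplus/0]_(a : jact A s | a i == ai) (jprob_mi i pi a * r i a).

Definition IgP (pi : jstrat A) (s s' : S) : R :=
  (if s == s' then 1 else 0) - gamma * Ppi pi s s'.

Definition mxmul (M M' : S -> S -> R) (s s' : S) : R :=
  rsum (fun t => M s t * M' t s').
Definition mxid (s s' : S) : R := if s == s' then 1 else 0.

Definition resolvent (pi : jstrat A) : S -> S -> R :=
  epsilon (inhabits (fun _ _ : S => 0))
    (fun M => mxmul M (IgP pi) = mxid /\ mxmul (IgP pi) M = mxid).

Definition value (i : 'I_N) (pi : jstrat A) (s : S) : R :=
  rsum (fun t => resolvent pi s t * rpi i pi t).

Definition Tpi (i : 'I_N) (pi : jstrat A) (v : S -> R) (s : S) : R :=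
  rpi i pi s + gamma * rsum (fun s' => Ppi pi s s' * v s').
Definition Tstar (i : 'I_N) (pi : jstrat A) (v : S -> R) (s : S) : R :=
  fmax (fun ai : A i s => rmi pi ai + gamma * rsum (fun s' => Pmi pi ai s' * v s')).

Definition Cinf (mu nu : S -> R) (pi : jstrat A) : R :=
  fmax (fun s => (1 - gamma) * rsum (fun t => mu t * resolvent pi t s) / nu s).

End Game.

Definition normp (S : finType) (mu : S -> R) (q : R) (f : S -> R) : R :=
  rpow (rsum (fun s => mu s * rpow (Rabs (f s)) q)) (1 / q).

(* Because pistar agrees with pi off player i, the one-step operator of pistar is
   dominated by the optimal operator T*, and for every sigma,
   v_sigma - v = (I - gamma P_sigma)^-1 (T_sigma v - v).  Hence
   0 <= v_pistar - v_pi <= R_pistar |T* v - v| + R_pi |T_pi v - v|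
   with R_sigma = (I - gamma P_sigma)^-1.  Each (1 - gamma) R_sigma is a stochastic
   matrix, so Jensen's inequality and the density bound C_sigma nu of the discounted
   occupancy measure mu^T (1 - gamma) R_sigma control the mu-L^q norm of each term by
   the nu-L^q norm of the corresponding residual.  The two terms are recombined by the
   power-mean inequality (x + y)^q <= (a + b)^(q-1) (x^q / a^(q-1) + y^q / b^(q-1))
   with a = C_pistar^(q'/q) and b = C_pi^(q'/q), for which a^(q-1) = C_pistar. *)

From Stdlib Require Import Reals Lra ClassicalEpsilon FunctionalExtensionality.
From mathcomp Require Import all_boot all_order ssralg matrix Rstruct.
Set Implicit Arguments.
Unset Strict Implicit.
Unset Printing Implicit Defensive.
Local Open Scope R_scope.

Lemma rpowE x y : 0 < x -> rpow x y = Rpower x y.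
Proof. by move=> hx; rewrite /rpow; case: Rle_dec => //= h; lra. Qed.

Lemma rpow0 y : rpow 0 y = 0.
Proof. by rewrite /rpow; case: Rle_dec => //= h; lra. Qed.

Lemma rpow_ge0 x y : 0 <= rpow x y.
Proof. by rewrite /rpow; case: Rle_dec => h /=; [lra | left; exact: exp_pos]. Qed.

Lemma rpow_gt0 x y : 0 < x -> 0 < rpow x y.
Proof. by move=> hx; rewrite rpowE //; exact: exp_pos. Qed.

Lemma rpow1 x : 0 <= x -> rpow x 1 = x.
Proof.
move=> hx; have [->|hx0] := Req_dec x 0; first exact: rpow0.
by rewrite rpowE ?Rpower_1 //; lra.
Qed.

Lemma rpowD x a b : 0 < x -> rpow x (a + b) = rpow x a * rpow x b.
Proof. by move=> hx; rewrite !rpowE // Rpower_plus. Qed.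

Lemma rpowM x y z : 0 <= x -> 0 <= y -> rpow (x * y) z = rpow x z * rpow y z.
Proof.
move=> hx hy; have [->|hx0] := Req_dec x 0; first by rewrite Rmult_0_l rpow0 Rmult_0_l.
have [->|hy0] := Req_dec y 0; first by rewrite Rmult_0_r rpow0 Rmult_0_r.
rewrite !rpowE ?Rpower_mult_distr //; try lra.
apply: Rmult_lt_0_compat; lra.
Qed.

Lemma rpowV x z : 0 < x -> rpow (/ x) z = / rpow x z.
Proof.
move=> hx; rewrite !rpowE //; last exact: Rinv_0_lt_compat.
by rewrite /Rpower ln_Rinv // -exp_Ropp; f_equal; ring.
Qed.

Lemma rpow_div x y z : 0 <= x -> 0 < y -> rpow (x / y) z = rpow x z / rpow y z.
Proof.
by move=> hx hy; rewrite /Rdiv rpowM ?rpowV //; left; exact: Rinv_0_lt_compat.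
Qed.

Lemma rpow_rpow x a b : 0 <= x -> rpow (rpow x a) b = rpow x (a * b).
Proof.
move=> hx; have [->|hx0] := Req_dec x 0; first by rewrite !rpow0.
have hx' : 0 < x by lra.
by rewrite (@rpowE x a hx') rpowE ?Rpower_mult ?rpowE //; exact: exp_pos.
Qed.

Lemma rpow_le_compat x y z : 0 <= x -> x <= y -> 0 <= z -> rpow x z <= rpow y z.
Proof.
move=> hx hxy hz; have [->|hx0] := Req_dec x 0; first by rewrite rpow0; exact: rpow_ge0.
rewrite !rpowE; try lra; apply: Rle_Rpower_l => //; lra.
Qed.

(* [exp t >= 1 + t] at [t = (q - 1) ln z] and at [t = - ln z] gives [z <= z^q / q + 1 - 1/q]. *)
Lemma rpow_bernoulli z q : 0 <= z -> 1 <= q -> 1 + q * (z - 1) <= rpow z q.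
Proof.
move=> hz hq; have [->|hz0] := Req_dec z 0; first by rewrite rpow0; nra.
rewrite rpowE /Rpower; last lra.
set u := q * ln z; set a := / q.
have hqa : q * a = 1 by rewrite /a; field; lra.
have ha1 : a <= 1 by rewrite /a -Rinv_1; apply: Rinv_le_contravar; lra.
have hE : exp (a * u) = z.
  by rewrite /u -Rmult_assoc (Rmult_comm a) hqa Rmult_1_l exp_ln //; lra.
have e1 : exp u = z * exp ((1 - a) * u) by rewrite -hE -exp_plus; f_equal; ring.
have e2 : 1 = z * exp (- (a * u)) by rewrite -hE -exp_plus Rplus_opp_r exp_0.
have i1 := exp_ineq1_le ((1 - a) * u).
have i2 := exp_ineq1_le (- (a * u)).
have key : z <= a * exp u + (1 - a).
  have h1 : z * (1 + (1 - a) * u) <= exp u by rewrite e1; apply: Rmult_le_compat_l; lra.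
  have h2 : z * (1 + - (a * u)) <= 1 by rewrite {2}e2; apply: Rmult_le_compat_l; lra.
  nra.
have : q * z <= q * (a * exp u + (1 - a)) by apply: Rmult_le_compat_l; lra.
have -> : q * (a * exp u + (1 - a)) = (q * a) * exp u + q - q * a by ring.
rewrite hqa; lra.
Qed.

Lemma rpow_tangent_le y m q : 0 <= y -> 0 < m -> 1 <= q ->
  rpow m q * (1 + q * (y / m - 1)) <= rpow y q.
Proof.
move=> hy hm hq.
have hym : 0 <= y / m by apply: Rmult_le_pos => //; left; apply: Rinv_0_lt_compat.
have -> : rpow y q = rpow m q * rpow (y / m) q by rewrite -rpowM; [f_equal; field|..]; lra.
apply: Rmult_le_compat_l; [exact: rpow_ge0 | exact: rpow_bernoulli].
Qed.

Section FiniteSums.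
Variable T : finType.
Implicit Types F G : T -> R.

Lemma rsum_le F G : (forall t, F t <= G t) -> rsum F <= rsum G.
Proof. by move=> h; apply: (big_ind2 (fun a b => a <= b)) => // *; lra. Qed.

Lemma rsum_ge0 F : (forall t, 0 <= F t) -> 0 <= rsum F.
Proof. by move=> h; apply: (big_ind (fun a => 0 <= a)) => // *; lra. Qed.

Lemma rsumD F G : rsum (fun t => F t + G t) = rsum F + rsum G.
Proof. exact: big_split. Qed.

Lemma rsumZ c F : rsum (fun t => c * F t) = c * rsum F.
Proof. by rewrite /rsum big_distrr. Qed.

Lemma eq_rsum F G : (forall t, F t = G t) -> rsum F = rsum G.
Proof. by move=> h; apply: eq_bigr => t _. Qed.

Lemma rsumB F G : rsum (fun t => F t - G t) = rsum F - rsum G.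
Proof.
have e t : F t - G t = F t + (-1) * G t by ring.
by rewrite (eq_rsum e) rsumD rsumZ; ring.
Qed.

Lemma rsum_delta s F : rsum (fun t => mxid s t * F t) = F s.
Proof.
rewrite /rsum (bigD1 s) //= /mxid eqxx big1 ?Rplus_0_r ?Rmult_1_l // => t.
by rewrite eq_sym => /negbTE ->; rewrite Rmult_0_l.
Qed.

Lemma Rabs_rsum_le F : Rabs (rsum F) <= rsum (fun t => Rabs (F t)).
Proof.
apply: (big_ind2 (fun a b => Rabs a <= b)) => [|a b c d h1 h2|t _].
- by rewrite Rabs_R0; lra.
- by apply: Rle_trans (Rabs_triang _ _) _; lra.
- lra.
Qed.

Lemma rsum_eq0 F : (forall t, 0 <= F t) -> rsum F <= 0 -> forall t, F t = 0.
Proof.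
move=> h0 hs t; apply: Rle_antisym => //; apply: Rle_trans hs.
rewrite /rsum (bigD1 t) //=.
have : 0 <= \big[Rplus/0]_(u | u != t) F u by apply: (big_ind (fun a => 0 <= a)) => // *; lra.
lra.
Qed.

Lemma exists_argmin F (t0 : T) : exists s, forall t, F s <= F t.
Proof.
case: (@Order.TotalTheory.arg_minP _ R T t0 xpredT F isT) => s _ h.
by exists s => t; apply/RleP; exact: h.
Qed.

Lemma le_fmax F t : F t <= fmax F.
Proof.
rewrite /fmax; case E: (enum T) => [|a l]; first by have := mem_enum T t; rewrite E.
rewrite (_ : Rmax = Order.max); last by do 2!apply: functional_extensionality => ?; exact: RmaxE.
by apply/RleP; exact: Order.TotalTheory.le_bigmax.
Qed.

End FiniteSums.

Lemma rsum_exchange (T U : finType) (F : T -> U -> R) :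
  rsum (fun t => rsum (F t)) = rsum (fun u => rsum (fun t => F t u)).
Proof. exact: exchange_big. Qed.

Lemma rpow_jensen (T : finType) (w y : T -> R) q : 1 <= q ->
  (forall t, 0 <= w t) -> rsum w = 1 -> (forall t, 0 <= y t) ->
  rpow (rsum (fun t => w t * y t)) q <= rsum (fun t => w t * rpow (y t) q).
Proof.
move=> hq hw hw1 hy; set m := rsum _.
have hm : 0 <= m by apply: rsum_ge0 => t; exact: Rmult_le_pos.
have [->|hm0] := Req_dec m 0.
  by rewrite rpow0; apply: rsum_ge0 => t; apply: Rmult_le_pos => //; exact: rpow_ge0.
have hm' : 0 < m by lra.
apply: (Rle_trans _ _ _ _ (rsum_le (fun t =>
  Rmult_le_compat_l _ _ _ (hw t) (rpow_tangent_le (hy t) hm' hq)))).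
have e t : w t * (rpow m q * (1 + q * (y t / m - 1))) =
    (rpow m q * (1 - q)) * w t + (rpow m q * q / m) * (w t * y t) by field; lra.
by rewrite (eq_rsum e) rsumD !rsumZ hw1 -/m; right; field; lra.
Qed.

(* Jensen for the two points [x (a+b)/a] and [y (a+b)/b] with weights [a/(a+b)] and [b/(a+b)]. *)
Lemma rpow_add_le x y a b q : 0 <= x -> 0 <= y -> 0 < a -> 0 < b -> 1 <= q ->
  rpow (x + y) q
  <= rpow (a + b) (q - 1) * (rpow x q / rpow a (q - 1) + rpow y q / rpow b (q - 1)).
Proof.
move=> hx hy ha hb hq; set K := a + b.
have hK : 0 < K by rewrite /K; lra.
have hpow c : 0 < c -> rpow c q = rpow c (q - 1) * c.
  by move=> hc; rewrite -{1}(Rplus_minus 1 q) Rplus_comm rpowD // rpow1 //; lra.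
pose w (t : bool) := if t then a / K else b / K.
pose z (t : bool) := if t then x / (a / K) else y / (b / K).
have haK : 0 < a / K by exact: Rdiv_lt_0_compat.
have hbK : 0 < b / K by exact: Rdiv_lt_0_compat.
have hw t : 0 <= w t by case: t; rewrite /w; lra.
have hw1 : rsum w = 1 by rewrite /rsum big_bool /w /= /K; field; lra.
have hz t : 0 <= z t by case: t; rewrite /z; apply: Rmult_le_pos => //; left;
  exact: Rinv_0_lt_compat.
have := rpow_jensen hq hw hw1 hz; rewrite /rsum !big_bool /w /z /=.
rewrite (_ : a / K * (x / (a / K)) + b / K * (y / (b / K)) = x + y); last by field; lra.
rewrite !rpow_div ?(hpow a) ?(hpow b) ?(hpow K); try lra.
have := rpow_gt0 (q - 1) ha; have := rpow_gt0 (q - 1) hb; have := rpow_gt0 (q - 1) hK.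
by move=> hKq hbq haq J; apply: (Rle_trans _ _ _ J); right; field; lra.
Qed.

Lemma rpow_conjugate_exponent C q q' : 0 < C -> 1 < q -> 1 < q' -> 1 / q + 1 / q' = 1 ->
  rpow (rpow C (q' / q)) (q - 1) = C.
Proof.
move=> hC hq hq' hqq.
have e : q' / q * (q - 1) = 1.
  have -> : q' / q * (q - 1) = q' * (1 - 1 / q) by field; lra.
  by rewrite (_ : 1 - 1 / q = 1 / q'); [field | ]; lra.
by rewrite rpow_rpow ?e ?rpow1 //; lra.
Qed.

Lemma rsum_mxmul (S : finType) (M M' : S -> S -> R) (w : S -> R) s :
  rsum (fun u => M s u * rsum (fun t => M' u t * w t)) = rsum (fun t => mxmul M M' s t * w t).
Proof.
transitivity (rsum (fun u => rsum (fun t => M s u * M' u t * w t))).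
  by apply: eq_rsum => u; rewrite -rsumZ; apply: eq_rsum => t; ring.
rewrite rsum_exchange; apply: eq_rsum => t.
by rewrite /mxmul Rmult_comm -rsumZ; apply: eq_rsum => u; ring.
Qed.

Lemma mxmul_left_inverse_apply (S : finType) (M B : S -> S -> R) :
  mxmul M B = @mxid S -> forall (w : S -> R) s,
  rsum (fun u => M s u * rsum (fun t => B u t * w t)) = w s.
Proof. by move=> hM w s; rewrite rsum_mxmul hM rsum_delta. Qed.

Section StochasticResolvent.
Variables (S : finType) (P : S -> S -> R) (gamma : R).
Hypotheses (P_ge0 : forall s t, 0 <= P s t) (P_sum1 : forall s, rsum (P s) = 1)
  (gamma_ge0 : 0 <= gamma) (gamma_lt1 : gamma < 1).

Definition IgPmx (s t : S) : R := mxid s t - gamma * P s t.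

Lemma IgPmx_expand s (x : S -> R) :
  rsum (fun t => IgPmx s t * x t) = x s - gamma * rsum (fun t => P s t * x t).
Proof.
have e t : IgPmx s t * x t = mxid s t * x t + (- gamma) * (P s t * x t).
  by rewrite /IgPmx; ring.
by rewrite (eq_rsum e) rsumD rsumZ rsum_delta; ring.
Qed.

Lemma IgPmx_inv_rowsum M : mxmul M IgPmx = @mxid S ->
  forall s, rsum (M s) = 1 / (1 - gamma).
Proof.
move=> hM s; rewrite -(mxmul_left_inverse_apply hM (fun _ => 1 / (1 - gamma)) s).
apply: eq_rsum => u.
by rewrite IgPmx_expand (eq_rsum (fun t => Rmult_comm _ _)) rsumZ P_sum1; field; lra.
Qed.

(* Minimum principle: if [s] minimizes column [t] of [M] then [M s t <= (P M) s t],
   so [0 <= ((I - gamma P) M) s t <= (1 - gamma) M s t]. *)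
Lemma IgPmx_inv_ge0 M : mxmul IgPmx M = @mxid S -> forall s t, 0 <= M s t.
Proof.
move=> hM s0 t.
have [s hs] := exists_argmin (fun u => M u t) s0.
suff : 0 <= M s t by move=> h; exact: Rle_trans h (hs s0).
have hPM : M s t <= rsum (fun u => P s u * M u t).
  rewrite -[X in X <= _]Rmult_1_l -(P_sum1 s) /rsum big_distrl /=.
  by apply: rsum_le => u; apply: Rmult_le_compat_l => //; exact: hs.
have := congr1 (fun M => M s t) hM; rewrite /= {1}/mxmul IgPmx_expand.
have := Rmult_le_compat_l _ _ _ gamma_ge0 hPM.
have : 0 <= mxid s t by rewrite /mxid; case: (s == t); lra.
nra.
Qed.

Lemma IgPmx_row_kernel (x : S -> R) :
  (forall t, rsum (fun s => x s * IgPmx s t) = 0) -> forall s, x s = 0.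
Proof.
move=> hx.
have e t : x t = gamma * rsum (fun s => x s * P s t).
  have := hx t.
  have e s : x s * IgPmx s t = mxid t s * x s + (- gamma) * (x s * P s t).
    by rewrite /IgPmx /mxid eq_sym; case: eqP => _; ring.
  by rewrite (eq_rsum e) rsumD rsumZ rsum_delta; lra.
have h1 t : Rabs (x t) <= gamma * rsum (fun s => Rabs (x s) * P s t).
  rewrite {1}e Rabs_mult Rabs_right; last lra.
  apply: Rmult_le_compat_l => //; apply: Rle_trans (Rabs_rsum_le _) _.
  by apply: rsum_le => s; rewrite Rabs_mult (Rabs_right (P s t)); [lra | apply: Rle_ge].
have h2 : rsum (fun t => Rabs (x t)) <= gamma * rsum (fun s => Rabs (x s)).
  apply: Rle_trans (rsum_le h1) _; rewrite rsumZ rsum_exchange; right; f_equal.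
  by apply: eq_rsum => s; rewrite rsumZ P_sum1; ring.
have h3 : 0 <= rsum (fun t => Rabs (x t)) by apply: rsum_ge0 => t; exact: Rabs_pos.
have h0 : rsum (fun t => Rabs (x t)) <= 0 by nra.
move=> s; have := rsum_eq0 (fun t => Rabs_pos (x t)) h0 s.
by have [//|hn] := Req_dec (x s) 0; move/(@Rabs_no_R0 _ hn).
Qed.

Lemma sum_ord_rsum (F : 'I_#|S| -> R) : (\sum_i F i)%R = rsum (fun s => F (enum_rank s)).
Proof.
rewrite /rsum (reindex (@enum_rank S)) //.
by exists (@enum_val S S) => x _; [rewrite enum_rankK | rewrite enum_valK].
Qed.

Definition IgPmx_mx : 'M[R]_#|S| := \matrix_(i, j) IgPmx (enum_val i) (enum_val j).

Lemma IgPmx_unitmx : IgPmx_mx \in unitmx.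
Proof.
rewrite unitmxE GRing.unitfE; apply/det0P => -[v /negP nv0 vB0]; apply: nv0.
apply/eqP/rowP => j; rewrite !mxE -(enum_valK j).
apply: (IgPmx_row_kernel (x := fun s => v ord0 (enum_rank s))) => t.
have := congr1 (fun A : 'M_(1, #|S|) => A ord0 (enum_rank t)) vB0.
rewrite /= !mxE sum_ord_rsum (_ : 0%R = 0) // => <-.
by apply: eq_rsum => s; rewrite /IgPmx_mx mxE !enum_rankK.
Qed.

Lemma exists_IgPmx_inverse :
  exists M, mxmul M IgPmx = @mxid S /\ mxmul IgPmx M = @mxid S.
Proof.
exists (fun s t => invmx IgPmx_mx (enum_rank s) (enum_rank t)).
have hid s t : ((1%:M)%R : 'M[R]_#|S|) (enum_rank s) (enum_rank t) = mxid s t.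
  by rewrite mxE /mxid (inj_eq enum_rank_inj); case: (s == t).
split; do 2!apply: functional_extensionality => ?; rewrite -hid.
- rewrite -(mulVmx IgPmx_unitmx) mxE sum_ord_rsum /mxmul; apply: eq_rsum => u.
  by rewrite /IgPmx_mx mxE !enum_rankK.
- rewrite -(mulmxV IgPmx_unitmx) mxE sum_ord_rsum /mxmul; apply: eq_rsum => u.
  by rewrite /IgPmx_mx mxE !enum_rankK.
Qed.

End StochasticResolvent.

Lemma rpow_normp (S : finType) (nu : S -> R) q (g : S -> R) :
  (forall s, 0 <= nu s) -> 0 < q ->
  rpow (normp nu q g) q = rsum (fun s => nu s * rpow (Rabs (g s)) q).
Proof.
move=> hnu hq; rewrite /normp rpow_rpow; last first.
  by apply: rsum_ge0 => s; apply: Rmult_le_pos => //; exact: rpow_ge0.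
by rewrite (_ : 1 / q * q = 1) ?rpow1 //; [apply: rsum_ge0 => s; apply: Rmult_le_pos => //;
  exact: rpow_ge0 | field; lra].
Qed.

Section SplitNormBound.
Variables (S : finType) (mu : S -> R) (f a b : S -> R) (q q' c C1 C2 X Y : R).
Hypotheses (mu_ge0 : forall s, 0 <= mu s) (q_gt1 : 1 < q) (q'_gt1 : 1 < q')
  (conj_qq' : 1 / q + 1 / q' = 1) (c_ge0 : 0 <= c) (C1_gt0 : 0 < C1) (C2_gt0 : 0 < C2)
  (a_ge0 : forall s, 0 <= a s) (b_ge0 : forall s, 0 <= b s)
  (f_le : forall s, Rabs (f s) <= a s + b s)
  (a_le : rsum (fun s => mu s * rpow (a s) q) <= rpow c q * C1 * X)
  (b_le : rsum (fun s => mu s * rpow (b s) q) <= rpow c q * C2 * Y).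

Let K := rpow C1 (q' / q) + rpow C2 (q' / q).

Lemma rsum_rpow_le_split :
  rsum (fun s => mu s * rpow (Rabs (f s)) q) <= rpow K (q - 1) * rpow c q * (X + Y).
Proof.
have hpt s : rpow (Rabs (f s)) q
    <= rpow K (q - 1) * (rpow (a s) q / C1 + rpow (b s) q / C2).
  apply: Rle_trans (rpow_le_compat (Rabs_pos _) (f_le s) _) _; first lra.
  have := rpow_add_le (a_ge0 s) (b_ge0 s) (rpow_gt0 (q' / q) C1_gt0)
    (rpow_gt0 (q' / q) C2_gt0) (Rlt_le _ _ q_gt1).
  by rewrite !rpow_conjugate_exponent.
apply: (Rle_trans _ _ _ (rsum_le (fun s => Rmult_le_compat_l _ _ _ (mu_ge0 s) (hpt s)))).
have e s : mu s * (rpow K (q - 1) * (rpow (a s) q / C1 + rpow (b s) q / C2)) =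
    (rpow K (q - 1) / C1) * (mu s * rpow (a s) q) + (rpow K (q - 1) / C2) * (mu s * rpow (b s) q).
  by field; lra.
rewrite (eq_rsum e) rsumD !rsumZ.
have hK : 0 < rpow K (q - 1) by apply: rpow_gt0; rewrite /K;
  have := rpow_gt0 (q' / q) C1_gt0; have := rpow_gt0 (q' / q) C2_gt0; lra.
have h1 := Rmult_le_compat_l _ _ _ (Rlt_le _ _ (Rdiv_lt_0_compat _ _ hK C1_gt0)) a_le.
have h2 := Rmult_le_compat_l _ _ _ (Rlt_le _ _ (Rdiv_lt_0_compat _ _ hK C2_gt0)) b_le.
apply: Rle_trans (Rplus_le_compat _ _ _ _ h1 h2) _; right; field; lra.
Qed.

Lemma normp_le_split : 0 <= X + Y ->
  normp mu q f <= c * rpow K (1 / q') * rpow (X + Y) (1 / q).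
Proof.
move=> hXY; have hK : 0 <= rpow K (q - 1) by exact: rpow_ge0.
have hK0 : 0 <= K by have := rpow_ge0 C1 (q' / q); have := rpow_ge0 C2 (q' / q); rewrite /K; lra.
have hc : 0 <= rpow c q by exact: rpow_ge0.
apply: Rle_trans (rpow_le_compat _ rsum_rpow_le_split _) _.
- by apply: rsum_ge0 => s; apply: Rmult_le_pos => //; exact: rpow_ge0.
- by left; apply: Rdiv_lt_0_compat; lra.
rewrite !rpowM ?rpow_rpow //; try exact: Rmult_le_pos.
have -> : (q - 1) * (1 / q) = 1 / q' by rewrite (_ : 1 / q' = 1 - 1 / q); [field | ]; lra.
rewrite (_ : q * (1 / q) = 1) ?rpow1 //; last by field; lra.
by right; ring.
Qed.

End SplitNormBound.

Lemma sum_dffun_prod (I : finType) (T_ : I -> finType) (f : forall i, T_ i -> R) :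
  \big[Rplus/0]_(a : {dffun forall i, T_ i}) \big[Rmult/1]_(i : I) f i (a i)
  = \big[Rmult/1]_(i : I) \big[Rplus/0]_(x : T_ i) f i x.
Proof.
rewrite (reindex (@dffun_of_fprod I T_)); last first.
  by exists (@fprod_of_dffun I T_) => x _; [rewrite dffun_of_fprodK | rewrite fprod_of_dffunK].
pose P_ i := [ffun x : T_ i => f i x].
transitivity (\big[Rplus/0]_(t : fprod T_) \big[Rmult/1]_(i in I) P_ i (t i)).
  by apply: eq_bigr => t _; apply: eq_bigr => i _; rewrite /P_ !ffunE.
rewrite big_fprod.
transitivity (\big[Rmult/1]_(i : I) \big[Rplus/0]_(x in tagged_with T_ i) untag 0 (P_ i) x).
  by rewrite bigA_distr_big_dep.
apply: eq_bigr => i _; rewrite big_tag; apply: eq_bigr => x _.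
by congr untag; apply: functional_extensionality => y; rewrite /P_ ffunE.
Qed.

Section MarkovGame.
Variables (N : nat) (S : finType) (A : 'I_N -> S -> finType).
Variables (r : 'I_N -> forall s : S, jact A s -> R)
  (p : forall s : S, jact A s -> S -> R) (gamma : R).
Hypotheses (p_distr : forall (s : S) (a : jact A s), is_distr (p a))
  (gamma_ge0 : 0 <= gamma) (gamma_lt1 : gamma < 1).
Implicit Types (sg pi : jstrat A) (v : S -> R).

Lemma jprob_ge0 sg : is_jstrategy sg -> forall s (a : jact A s), 0 <= jprob sg a.
Proof.
move=> hsg s a; apply: (big_ind (fun x => 0 <= x)) => [|x y|j _]; first lra.
  exact: Rmult_le_pos.
exact: (hsg j s).1.
Qed.

Lemma jprob_sum1 sg : is_jstrategy sg -> forall s, rsum (fun a : jact A s => jprob sg a) = 1.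
Proof.
move=> hsg s; rewrite /rsum /jprob (sum_dffun_prod (fun j (x : A j s) => sg j s x)).
by apply: big1 => j _; exact: (hsg j s).2.
Qed.

Lemma Ppi_ge0 sg : is_jstrategy sg -> forall s t, 0 <= Ppi p sg s t.
Proof.
move=> hsg s t; apply: rsum_ge0 => a.
by apply: Rmult_le_pos; [exact: jprob_ge0 | exact: (p_distr a).1].
Qed.

Lemma Ppi_sum1 sg : is_jstrategy sg -> forall s, rsum (Ppi p sg s) = 1.
Proof.
move=> hsg s; rewrite /Ppi rsum_exchange -(jprob_sum1 hsg s).
by apply: eq_rsum => a; rewrite rsumZ (p_distr a).2 Rmult_1_r.
Qed.

Lemma resolvent_inverse sg : is_jstrategy sg ->
  mxmul (resolvent p gamma sg) (IgPmx (Ppi p sg) gamma) = @mxid S /\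
  mxmul (IgPmx (Ppi p sg) gamma) (resolvent p gamma sg) = @mxid S.
Proof.
move=> hsg; apply: (epsilon_spec (inhabits (fun _ _ : S => 0))
  (fun M => mxmul M (IgP p gamma sg) = @mxid S /\ mxmul (IgP p gamma sg) M = @mxid S)).
exact: exists_IgPmx_inverse (Ppi_ge0 hsg) (Ppi_sum1 hsg) gamma_ge0 gamma_lt1.
Qed.

Lemma resolvent_ge0 sg : is_jstrategy sg -> forall s t, 0 <= resolvent p gamma sg s t.
Proof.
move=> hsg; apply: (IgPmx_inv_ge0 (Ppi_ge0 hsg) (Ppi_sum1 hsg) gamma_ge0 gamma_lt1).
exact: (resolvent_inverse hsg).2.
Qed.

Lemma resolvent_rowsum sg : is_jstrategy sg ->
  forall s, rsum (resolvent p gamma sg s) = 1 / (1 - gamma).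
Proof.
move=> hsg; apply: (IgPmx_inv_rowsum (Ppi_sum1 hsg) gamma_lt1).
exact: (resolvent_inverse hsg).1.
Qed.

(* [(I - gamma P_sg) (v_sg - v) = T_sg v - v]. *)
Lemma value_sub_resolvent i sg : is_jstrategy sg -> forall v s,
  value r p gamma i sg s - v s =
  rsum (fun t => resolvent p gamma sg s t * (Tpi r p gamma i sg v t - v t)).
Proof.
move=> hsg v s; have [hRB hBR] := resolvent_inverse hsg.
rewrite -(mxmul_left_inverse_apply hRB (fun t => value r p gamma i sg t - v t) s).
apply: eq_rsum => u; f_equal.
have hV : rsum (fun t => IgPmx (Ppi p sg) gamma u t * value r p gamma i sg t) = rpi r i sg u.
  exact: (mxmul_left_inverse_apply hBR).
rewrite IgPmx_expand in hV.
by rewrite IgPmx_expand (eq_rsum (fun t => Rmult_minus_distr_l _ _ _)) rsumB /Tpi; lra.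
Qed.

Definition qvalue i v s (a : jact A s) : R :=
  r i a + gamma * rsum (fun s' => p a s' * v s').

Lemma big_qvalue i v s (P : pred (jact A s)) (w : jact A s -> R) :
  \big[Rplus/0]_(a | P a) (w a * qvalue i v a)
  = \big[Rplus/0]_(a | P a) (w a * r i a)
    + gamma * rsum (fun s' => \big[Rplus/0]_(a | P a) (w a * p a s') * v s').
Proof.
have e a : w a * qvalue i v a = w a * r i a + gamma * rsum (fun s' => w a * p a s' * v s').
  by rewrite /qvalue Rmult_plus_distr_l -!rsumZ; f_equal; apply: eq_rsum => t; ring.
rewrite (eq_bigr _ (fun a _ => e a)) big_split /= -big_distrr /=; congr (_ + gamma * _).
rewrite /rsum exchange_big /=; apply: eq_bigr => s' _.
by rewrite big_distrl.
Qed.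

Lemma Tpi_qvalue i sg v s :
  Tpi r p gamma i sg v s = rsum (fun a : jact A s => jprob sg a * qvalue i v a).
Proof. by rewrite /rsum big_qvalue. Qed.

Lemma Tstar_qvalue i pi v s (ai : A i s) :
  rmi r pi ai + gamma * rsum (fun s' => Pmi p pi ai s' * v s')
  = \big[Rplus/0]_(a : jact A s | a i == ai) (jprob_mi i pi a * qvalue i v a).
Proof. by rewrite big_qvalue. Qed.

Lemma rsum_jprob_deviation i sg pi : (forall j, j != i -> sg j = pi j) ->
  forall s (F : jact A s -> R),
  rsum (fun a : jact A s => jprob sg a * F a)
  = rsum (fun ai => sg i s ai * \big[Rplus/0]_(a : jact A s | a i == ai) (jprob_mi i pi a * F a)).
Proof.
move=> hmi s F; rewrite /rsum (partition_big (fun a : jact A s => a i) xpredT) //.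
apply: eq_bigr => ai _; rewrite big_distrr /=; apply: eq_bigr => a /eqP <-.
rewrite /jprob /jprob_mi (bigD1 i) //= Rmult_assoc; congr (_ * (_ * _)).
by apply: eq_bigr => j hj; rewrite hmi.
Qed.

Lemma Tpi_le_Tstar i sg pi : is_strategy (sg i) -> (forall j, j != i -> sg j = pi j) ->
  forall v s, Tpi r p gamma i sg v s <= Tstar r p gamma i pi v s.
Proof.
move=> hsg hmi v s.
pose X (ai : A i s) := rmi r pi ai + gamma * rsum (fun s' => Pmi p pi ai s' * v s').
rewrite Tpi_qvalue (rsum_jprob_deviation hmi).
rewrite (eq_rsum (fun ai => f_equal (Rmult _) (esym (Tstar_qvalue pi v ai)))) -/X.
apply: Rle_trans (_ : rsum (fun ai => sg i s ai * fmax X) <= _).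
  by apply: rsum_le => ai; apply: Rmult_le_compat_l; [exact: (hsg s).1 | exact: le_fmax].
by rewrite (eq_rsum (fun ai => Rmult_comm _ _)) rsumZ (hsg s).2 Rmult_1_r; right.
Qed.

Lemma value_gap_le i pi pistar : is_jstrategy pi -> is_jstrategy pistar ->
  (forall j, j != i -> pistar j = pi j) ->
  (forall s, value r p gamma i pi s <= value r p gamma i pistar s) -> forall v s,
  Rabs (value r p gamma i pistar s - value r p gamma i pi s)
  <= rsum (fun t => resolvent p gamma pistar s t * Rabs (Tstar r p gamma i pi v t - v t))
   + rsum (fun t => resolvent p gamma pi s t * Rabs (Tpi r p gamma i pi v t - v t)).
Proof.
move=> hpi hpistar hmi hbest v s.
rewrite Rabs_right; last by have := hbest s; lra.
rewrite (_ : _ - _ = (value r p gamma i pistar s - v s) - (value r p gamma i pi s - v s));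
  last ring.
rewrite !value_sub_resolvent //; apply: Rplus_le_compat.
- apply: rsum_le => t; apply: Rmult_le_compat_l; first exact: (resolvent_ge0 hpistar).
  have := Rle_abs (Tstar r p gamma i pi v t - v t).
  by have := Tpi_le_Tstar (hpistar i) hmi v t; lra.
- apply: Rle_trans (Rle_abs _) _; rewrite Rabs_Ropp.
  apply: Rle_trans (Rabs_rsum_le _) _; apply: rsum_le => t.
  rewrite Rabs_mult Rabs_right; first exact: Rle_refl.
  by apply: Rle_ge; exact: (resolvent_ge0 hpi).
Qed.

Definition occupancy (mu : S -> R) sg (t : S) : R :=
  (1 - gamma) * rsum (fun s => mu s * resolvent p gamma sg s t).

Section Concentrability.
Variables (mu nu : S -> R).
Hypotheses (mu_distr : is_distr mu) (nu_gt0 : forall s, 0 < nu s).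

Lemma occupancy_sum1 sg : is_jstrategy sg -> rsum (occupancy mu sg) = 1.
Proof.
move=> hsg; rewrite /occupancy rsumZ rsum_exchange.
rewrite (eq_rsum (fun s => rsumZ (mu s) _)) (eq_rsum (fun s => f_equal _ (resolvent_rowsum hsg s))).
by rewrite (eq_rsum (fun s => Rmult_comm _ _)) rsumZ mu_distr.2; field; lra.
Qed.

Lemma occupancy_le_Cinf sg t : occupancy mu sg t <= Cinf p gamma mu nu sg * nu t.
Proof.
have := le_fmax (fun t => occupancy mu sg t / nu t) t; have := nu_gt0 t.
rewrite -/(Cinf p gamma mu nu sg) => hnu hC.
rewrite -[X in X <= _](_ : occupancy mu sg t / nu t * nu t = _); last by field; lra.
exact: Rmult_le_compat_r (Rlt_le _ _ hnu) hC.
Qed.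

Lemma Cinf_gt0 sg : is_jstrategy sg -> 0 < Cinf p gamma mu nu sg.
Proof.
move=> hsg; apply: Rnot_le_lt => hC.
have : rsum (occupancy mu sg) <= rsum (fun _ : S => 0).
  apply: rsum_le => t; apply: Rle_trans (occupancy_le_Cinf sg t) _.
  by have := nu_gt0 t; nra.
by rewrite occupancy_sum1 // /rsum big1 //; lra.
Qed.

(* Jensen on each row of the stochastic matrix [(1 - gamma) resolvent], then the
   density bound of the occupancy measure with respect to [nu]. *)
Lemma resolvent_Lp_le sg q : is_jstrategy sg -> 1 <= q -> forall g : S -> R,
  rsum (fun s => mu s * rpow (rsum (fun t => resolvent p gamma sg s t * Rabs (g t))) q)
  <= rpow (1 / (1 - gamma)) q * Cinf p gamma mu nu sg
     * rsum (fun t => nu t * rpow (Rabs (g t)) q).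
Proof.
move=> hsg hq g; set c := 1 / (1 - gamma).
have hc : 0 <= c by rewrite /c; left; apply: Rdiv_lt_0_compat; lra.
pose w s t := (1 - gamma) * resolvent p gamma sg s t.
have hw0 s t : 0 <= w s t by apply: Rmult_le_pos; [lra | exact: resolvent_ge0].
have hw1 s : rsum (w s) = 1 by rewrite /w rsumZ resolvent_rowsum //; field; lra.
have hrow s : rpow (rsum (fun t => resolvent p gamma sg s t * Rabs (g t))) q
    <= rpow c q * rsum (fun t => w s t * rpow (Rabs (g t)) q).
  have -> : rsum (fun t => resolvent p gamma sg s t * Rabs (g t))
      = c * rsum (fun t => w s t * Rabs (g t)).
    by rewrite -rsumZ; apply: eq_rsum => t; rewrite /c /w; field; lra.
  rewrite rpowM //; last by apply: rsum_ge0 => t; apply: Rmult_le_pos => //; exact: Rabs_pos.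
  apply: Rmult_le_compat_l; first exact: rpow_ge0.
  by apply: rpow_jensen => // t; exact: Rabs_pos.
apply: (Rle_trans _ _ _ (rsum_le (fun s => Rmult_le_compat_l _ _ _ (mu_distr.1 s) (hrow s)))).
have e s : mu s * (rpow c q * rsum (fun t => w s t * rpow (Rabs (g t)) q))
    = rpow c q * rsum (fun t => (1 - gamma) * (mu s * resolvent p gamma sg s t)
                                 * rpow (Rabs (g t)) q).
  by rewrite -!rsumZ; apply: eq_rsum => t; rewrite /w; ring.
rewrite (eq_rsum e) rsumZ rsum_exchange Rmult_assoc; apply: Rmult_le_compat_l.
  exact: rpow_ge0.
rewrite -rsumZ; apply: rsum_le => t.
have -> : rsum (fun s => (1 - gamma) * (mu s * resolvent p gamma sg s t) * rpow (Rabs (g t)) q)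
    = occupancy mu sg t * rpow (Rabs (g t)) q.
  by rewrite /occupancy Rmult_comm -!rsumZ; apply: eq_rsum => s; ring.
have := occupancy_le_Cinf sg t; have := rpow_ge0 (Rabs (g t)) q; nra.
Qed.

End Concentrability.

End MarkovGame.

Theorem lemma1
  (N : nat) (S : finType) (A : 'I_N -> S -> finType)
  (HA : forall (j : 'I_N) (s : S), leq 1 #|A j s|)
  (r : 'I_N -> forall s : S, jact A s -> R)
  (p : forall s : S, jact A s -> S -> R)
  (Hp : forall (s : S) (a : jact A s), is_distr (p s a))
  (gamma : R) (Hg0 : 0 <= gamma) (Hg1 : gamma < 1)
  (q q' : R) (Hq : 1 < q) (Hq' : 1 < q') (Hqq' : 1 / q + 1 / q' = 1)
  (mu nu : S -> R) (Hmu : is_distr mu) (Hnu : is_distr nu)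
  (Hnupos : forall s, 0 < nu s)
  (pi : jstrat A) (Hpi : is_jstrategy pi)
  (i : 'I_N)
  (pistar : jstrat A) (Hpistar : is_jstrategy pistar)
  (Hpistar_mi : forall j : 'I_N, j != i -> pistar j = pi j)
  (Hbest : forall sigma : jstrat A, is_jstrategy sigma ->
             (forall j : 'I_N, j != i -> sigma j = pi j) ->
             forall s : S, value r p gamma i sigma s <= value r p gamma i pistar s)
  (v : S -> R) :
  normp mu q (fun s => value r p gamma i pistar s - value r p gamma i pi s)
  <= 1 / (1 - gamma)
     * rpow (rpow (Cinf p gamma mu nu pistar) (q' / q)
             + rpow (Cinf p gamma mu nu pi) (q' / q)) (1 / q')
     * rpow (rpow (normp nu q (fun s => Tstar r p gamma i pi v s - v s)) q
             + rpow (normp nu q (fun s => Tpi r p gamma i pi v s - v s)) q) (1 / q).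
Proof.
pose g1 s := Tstar r p gamma i pi v s - v s.
pose g2 s := Tpi r p gamma i pi v s - v s.
pose res sg (g : S -> R) s := rsum (fun t => resolvent p gamma sg s t * Rabs (g t)).
have res_ge0 sg g s : is_jstrategy sg -> 0 <= res sg g s.
  move=> hsg; apply: rsum_ge0 => t; apply: Rmult_le_pos; [exact: resolvent_ge0 | exact: Rabs_pos].
have hq1 : 1 <= q by lra.
rewrite !rpow_normp; [|exact: Hnu.1 | lra | exact: Hnu.1 | lra].
apply: (normp_le_split (a := res pistar g1) (b := res pi g2)) => //.
- exact: Hmu.1.
- by left; apply: Rdiv_lt_0_compat; lra.
- exact: (Cinf_gt0 Hp Hg0 Hg1 Hmu Hnupos Hpistar).
- exact: (Cinf_gt0 Hp Hg0 Hg1 Hmu Hnupos Hpi).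
- by move=> s; exact: res_ge0.
- by move=> s; exact: res_ge0.
- exact: (value_gap_le Hp Hg0 Hg1 Hpi Hpistar Hpistar_mi (Hbest pi Hpi (fun _ _ => erefl)) v).
- exact: (resolvent_Lp_le Hp Hg0 Hg1 Hmu Hnupos Hpistar hq1 g1).
- exact: (resolvent_Lp_le Hp Hg0 Hg1 Hmu Hnupos Hpi hq1 g2).
- by apply: Rplus_le_le_0_compat; apply: rsum_ge0 => s;
    exact: (Rmult_le_pos _ _ (Hnu.1 s) (rpow_ge0 _ _)).
Qed.
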